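(* Let $r_1,r_2,r_3$ be pairwise distinct integers with $r_1<0<r_3$ and $\gcd(r_1,r_2,r_3)=1$, and let $v_2\in\mathbb{N}\cup\{\infty\}$. Then $S_{(r_1,r_2,r_3)}^{(\infty,v_2,\infty)}=\mathbb{Z}$ if and only if (A) $S_{(r_1,r_3)}^{(\infty,\infty)}=\mathbb{Z}$, or (B) $r_2\notin S_{(r_1,r_3)}^{(\infty,\infty)}=\langle d'\rangle$, where $d'=\gcd(r_1,r_3)$, and $v_2\geq d'-1$ (with the convention $\infty\ge m$ for every integer $m$).
   Context: Let $L$ be an infinite-dimensional vector space over a field $F$ (of characteristic different from $2$) with basis $e_1,e_2,\dots$, and let $E$ be the Grassmann algebra of $L$: the unital associative algebra generated by $L$ subject to $e_ie_j=-e_je_i$; it has basis consisting of $1$ and the monomials $e_{i_1}\cdots e_{i_k}$ with $i_1<\dots<i_k$. Given pairwise distinct integers $r_1,\dots,r_n$ (lower indices) and $v_1,\dots,v_n\in\mathbb{N}\cup\{\infty\}$ (upper indices), split the basis $\{e_i\}$ into $n$ disjoint sets, the $j$-th of cardinality $v_j$ and spanning a subspace $L_{r_j}^{v_j}$, so $L=L_{r_1}^{v_1}\oplus\cdots\oplus L_{r_n}^{v_n}$. Declare $\|e_k\|=r_j$ iff $e_k\in L_{r_j}^{v_j}$, and $\|e_{k_1}\cdots e_{k_s}\|=\|e_{k_1}\|+\cdots+\|e_{k_s}\|$. This defines a $\mathbb{Z}$-grading $E_{(r_1,\dots,r_n)}^{(v_1,\dots,v_n)}=\bigoplus_{r\in\mathbb{Z}}A_r$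 on $E$ ($A_r$ spanned by the monomials of degree $r$), called an $n$-induced $\mathbb{Z}$-grading. Its support is $S_{(r_1,\dots,r_n)}^{(v_1,\dots,v_n)}=\{r\in\mathbb{Z}: A_r\neq 0\}$. For $d\in\mathbb{Z}$, $\langle d\rangle=d\mathbb{Z}$. *)

From mathcomp Require Import all_boot all_order all_algebra.
Set Implicit Arguments. Unset Strict Implicit. Unset Printing Implicit Defensive.
Import Order.TTheory GRing.Theory Num.Theory.
Local Open Scope ring_scope.

(* Upper indices live in N ∪ {∞}: [Some m] is the finite cardinal m,
   [None] is ∞. *)
Definition extnat := option nat.

Definition ge_ext (v : extnat) (m : int) : Prop :=
  match v with None => True | Some k => m <= k%:Z end.

(* The basis e_1, e_2, ... of L is indexed by nat (e_{k+1} <-> k).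
   A splitting of the basis into n disjoint sets, the j-th of cardinality
   v j, is a function [c : nat -> 'I_n] assigning to each basis vector the
   block it belongs to. *)
Definition block_card (n : nat) (c : nat -> 'I_n) (j : 'I_n) (v : extnat) : Prop :=
  match v with
  | Some m => exists s : seq nat, [/\ uniq s, size s = m & forall k, (c k == j) = (k \in s)]
  | None => forall N : nat, exists k : nat, (N <= k)%N /\ c k = j
  end.

Definition is_splitting (n : nat) (v : 'I_n -> extnat) (c : nat -> 'I_n) : Prop :=
  forall j, block_card c j (v j).

(* Monomials e_{k_1}...e_{k_s} (k_1<...<k_s), including 1 (s = 0), are
   encoded by duplicate-free lists of indices. *)
Definition mono_deg (n : nat) (r : 'I_n -> int) (c : nat -> 'I_n) (s : seq nat) : int :=
  \sum_(k <- s) r (c k).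

(* Support of the induced Z-grading: r \in S iff A_r <> 0 iff some basis
   monomial of E has degree r (A_r is spanned by the basis monomials of
   degree r, which are linearly independent). *)
Definition grading_support (n : nat) (r : 'I_n -> int) (c : nat -> 'I_n) : int -> Prop :=
  fun m => exists s : seq nat, uniq s /\ mono_deg r c s = m.

Definition vec3 {T} (a b d : T) : 'I_3 -> T :=
  fun j => match val j with 0%N => a | 1%N => b | _ => d end.
Definition vec2 {T} (a b : T) : 'I_2 -> T :=
  fun j => match val j with 0%N => a | _ => b end.

(* The support of an induced grading consists of the sums \sum_j x_j r_j with
   0 <= x_j <= v_j.  For two infinite blocks of degrees r1 < 0 < r3 these are
   exactly the multiples of d = gcd(r1, r3): Bezout coefficients can be shifted
   by multiples of (r3, -r1) until both are nonnegative.  The gcd condition makes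
   r2 a unit modulo d, so with the middle block every integer is reached iff
   every residue b r2 with b < d is available, i.e. iff v2 >= d - 1; when
   v2 = k < d - 1 the degree (k + 1) r2 is missed.  Since r2 is a multiple of d
   only when d = 1, (A) or (B) is also equivalent to v2 >= d - 1. *)

From mathcomp Require Import all_boot all_order all_algebra.
From mathcomp Require Import ring zify.
Import Order.TTheory GRing.Theory Num.Theory.
Set Implicit Arguments. Unset Strict Implicit.
Local Open Scope ring_scope.

Section Blocks.

Variables (n : nat) (c : nat -> 'I_n).

Definition in_block (j : 'I_n) : pred nat := fun k => c k == j.

Lemma block_seq_of_size j v (b : nat) : block_card c j v -> ge_ext v b ->
  exists s, [/\ uniq s, size s = b & all (in_block j) s].
Proof.
case: v => [m [s0 [us0 <- s0E]] | inf _] /=.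
  rewrite lez_nat => bm.
  exists (take b s0); split; first exact: take_uniq.
    by rewrite size_takel.
  by apply/allP => k /mem_take; rewrite /in_block s0E.
elim: b => [|b [s [us <- sj]]]; first by exists [::].
have [k [sk ck]] := inf (\max_(i <- s) i).+1.
have ks : k \notin s.
  apply/negP => /(leq_bigmax_seq (F := id)) => /(_ xpredT isT) ks.
  by move: (leq_ltn_trans ks sk); rewrite ltnn.
by exists (k :: s); rewrite /= ks us /in_block ck eqxx.
Qed.

Lemma ge_ext_count_block j v s : block_card c j v -> uniq s ->
  ge_ext v (count (in_block j) s).
Proof.
case: v => [m [s0 [_ <- s0E]] us|//] /=; rewrite lez_nat -size_filter.
apply: uniq_leq_size; first exact: filter_uniq.
by move=> k; rewrite mem_filter -s0E => /andP[].
Qed.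

Lemma mono_deg_block (r : 'I_n -> int) j s : all (in_block j) s ->
  mono_deg r c s = (size s)%:Z * r j.
Proof.
rewrite /mono_deg => /allP sj; rewrite (eq_big_seq (fun=> r j)).
  by rewrite big_const_seq count_predT iter_addr_0 pmulrn -mulrzl intz.
by move=> k /sj /eqP ->.
Qed.

Lemma mono_deg_flatten (r : 'I_n -> int) (ss : seq (seq nat)) :
  mono_deg r c (flatten ss) = \sum_(s <- ss) mono_deg r c s.
Proof. exact: big_flatten. Qed.

Lemma mono_deg_count (r : 'I_n -> int) s :
  mono_deg r c s = \sum_j (count (in_block j) s)%:Z * r j.
Proof.
elim: s => [|k s IHs]; first by rewrite /mono_deg big_nil big1 // => j; rewrite mul0r.
rewrite /mono_deg big_cons -/(mono_deg r c s) IHs.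
rewrite [RHS](eq_bigr (fun j => (in_block j k)%:Z * r j + (count (in_block j) s)%:Z * r j)).
  rewrite big_split /=; congr (_ + _).
  rewrite (bigD1 (c k)) //= {1}/in_block eqxx mul1r big1 ?addr0 //.
  by move=> j /negbTE; rewrite /in_block eq_sym => ->; rewrite mul0r.
by move=> j _; rewrite -mulrDl -PoszD.
Qed.

Lemma uniq_flatten_blocks (J : seq 'I_n) (f : 'I_n -> seq nat) : uniq J ->
  (forall j, uniq (f j) /\ all (in_block j) (f j)) -> uniq (flatten (map f J)).
Proof.
move=> + fP; elim: J => //= j J IHJ /andP[jJ uJ].
have [ufj /allP fj] := fP j.
rewrite cat_uniq ufj IHJ // andbT; apply/hasP => -[k /flattenP[_ /mapP[i iJ ->] ki]].
move/fj/eqP => ckj; have [_ /allP/(_ k ki)/eqP] := fP i.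
by rewrite ckj => ji; rewrite ji iJ in jJ.
Qed.

End Blocks.

Lemma grading_supportP n (v : 'I_n -> extnat) (r : 'I_n -> int) c m :
  is_splitting v c ->
  grading_support r c m <->
  exists2 x : 'I_n -> nat, forall j, ge_ext (v j) (x j) & m = \sum_j (x j)%:Z * r j.
Proof.
move=> split_c; split=> [[s [us <-]] | [x vx ->]].
  exists (fun j => count (in_block c j) s); last exact: mono_deg_count.
  by move=> j; apply: ge_ext_count_block.
have /fin_all_exists[f fP] j := block_seq_of_size (split_c j) (vx j).
exists (flatten (map f (index_enum 'I_n))); split.
  apply: (@uniq_flatten_blocks _ c); first exact: index_enum_uniq.
  by move=> j; have [? _ ?] := fP j.
rewrite mono_deg_flatten big_map; apply: eq_bigr => j _.
by have [_ <- /(mono_deg_block r)] := fP j.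
Qed.

Lemma support3P (r1 r2 r3 : int) v (c : nat -> 'I_3) m :
  is_splitting (vec3 None v None) c ->
  grading_support (vec3 r1 r2 r3) c m <->
  exists a b e : nat, ge_ext v b /\ m = a%:Z * r1 + b%:Z * r2 + e%:Z * r3.
Proof.
move=> /grading_supportP ->; split=> [[x vx ->] | [a [b [e [vb ->]]]]].
  do 3 eexists; split; last by rewrite !big_ord_recr big_ord0 /= add0r.
  exact: vx.
exists (vec3 a b e); first by case=> [[|[|[|j]]] ?].
by rewrite !big_ord_recr big_ord0 /= add0r.
Qed.

Lemma support2P (r1 r3 : int) (c : nat -> 'I_2) m :
  is_splitting (vec2 None None) c ->
  grading_support (vec2 r1 r3) c m <-> exists a e : nat, m = a%:Z * r1 + e%:Z * r3.
Proof.
move=> /grading_supportP ->; split=> [[x _ ->] | [a [e ->]]].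
  by do 2 eexists; rewrite !big_ord_recr big_ord0 /= add0r.
exists (vec2 a e); first by case=> [[|[|j]] ?].
by rewrite !big_ord_recr big_ord0 /= add0r.
Qed.

Lemma gcdz_gt0 (m n : int) : n != 0 -> 0 < gcdz m n.
Proof. by move=> n0; rewrite lt0r gcdz_eq0 negb_and n0 orbT. Qed.

Lemma dvdz_gcd_nneg_comb (r1 r3 m : int) : r1 < 0 -> 0 < r3 ->
  (gcdz r1 r3 %| m)%Z -> exists a e : nat, m = a%:Z * r1 + e%:Z * r3.
Proof.
move=> r1_lt0 r3_gt0 /dvdzP[k ->]; have [u [w <-]] := Bezoutz r1 r3.
pose t : nat := addn (absz (k * u)%R) (absz (k * w)%R).
exists (absz (k * u + t%:Z * r3)%R), (absz (k * w - t%:Z * r1)%R).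
have -> : absz (k * u + t%:Z * r3)%R = k * u + t%:Z * r3 :> int by rewrite /t; nia.
have -> : absz (k * w - t%:Z * r1)%R = k * w - t%:Z * r1 :> int by rewrite /t; nia.
ring.
Qed.

Lemma coprimez_residue (d r m : int) : 0 < d -> coprimez d r ->
  exists2 b : nat, b%:Z < d & (d %| m - b%:Z * r)%Z.
Proof.
move=> d_gt0 /eqP cop; have [u [w]] := Bezoutz d r; rewrite cop => Bez.
exists (absz ((m * w) %% d)%Z); first by rewrite gez0_abs ?modz_ge0 ?ltz_pmod ?gt_eqF.
rewrite gez0_abs ?modz_ge0 ?gt_eqF //; apply/dvdzP.
exists (m * u + ((m * w) %/ d)%Z * r).
have -> : ((m * w) %% d)%Z = m * w - ((m * w) %/ d)%Z * d.
  by rewrite {2}(divz_eq (m * w) d) addrC addKr.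
by rewrite -{1}[m]mulr1 -Bez; ring.
Qed.

Lemma coprimez_dvdz_eq1 (d r : int) : 0 <= d -> coprimez d r ->
  (d %| r)%Z = (d == 1).
Proof.
move=> d_ge0 cop; apply/idP/eqP => [d_r | ->]; last exact: dvd1z.
have : (d %| gcdz d r)%Z by rewrite dvdz_gcd dvdzz.
by rewrite (eqP cop) dvdz1; case: d d_ge0 {cop d_r} => // n _ /eqP/= ->.
Qed.

Lemma coprimez_ndvdz_mul (d r k : int) : coprimez d r -> 0 < k < d ->
  ~~ (d %| k * r)%Z.
Proof.
move=> cop /andP[k_gt0 k_lt_d]; rewrite Gauss_dvdzl //.
apply/negP => /dvdzP[q k_eq]; have [q_le0 | q_gt0] := lerP q 0; nia.
Qed.

Lemma support2_dvdz (r1 r3 : int) (c : nat -> 'I_2) m :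
  r1 < 0 -> 0 < r3 -> is_splitting (vec2 None None) c ->
  grading_support (vec2 r1 r3) c m <-> (gcdz r1 r3 %| m)%Z.
Proof.
move=> r1_lt0 r3_gt0 /support2P ->; split=> [[a [e ->]] |]; last exact: dvdz_gcd_nneg_comb.
by rewrite rpredD // dvdz_mull // ?dvdz_gcdl ?dvdz_gcdr.
Qed.

Lemma support3_full (r1 r2 r3 : int) v (c : nat -> 'I_3) :
  r1 < 0 -> 0 < r3 -> coprimez (gcdz r1 r3) r2 ->
  is_splitting (vec3 None v None) c ->
  (forall m, grading_support (vec3 r1 r2 r3) c m) <-> ge_ext v (gcdz r1 r3 - 1).
Proof.
move=> r1_lt0 r3_gt0 cop split_c; set d := gcdz r1 r3.
have d_gt0 : 0 < d by rewrite gcdz_gt0 ?gt_eqF.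
split=> [full | v_ge m]; last first.
  have [b b_lt_d /dvdz_gcd_nneg_comb] := coprimez_residue m d_gt0 cop.
  case/(_ r1_lt0 r3_gt0) => a [e m_eq]; apply/support3P => //.
  exists a, b, e; split; last by rewrite -[m](subrK (b%:Z * r2)) m_eq; ring.
  by case: v {split_c} v_ge => //= k; lia.
case: v split_c => //= k split_c; rewrite leNgt; apply/negP => k_lt.
have [a [b [e [/= b_le_k m_eq]]]] := (support3P _ _ _ _ split_c).1 (full (k.+1%:Z * r2)).
have : (d %| (k.+1%:Z - b%:Z) * r2)%Z.
  have -> : (k.+1%:Z - b%:Z) * r2 = a%:Z * r1 + e%:Z * r3 by rewrite mulrBl m_eq; ring.
  by rewrite rpredD // dvdz_mull // ?dvdz_gcdl ?dvdz_gcdr.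
by apply/negP/coprimez_ndvdz_mul => //; lia.
Qed.

Theorem theorem3p4 (r1 r2 r3 : int) (v2 : extnat)
  (c3 : nat -> 'I_3) (c2 : nat -> 'I_2) :
  r1 != r2 -> r1 != r3 -> r2 != r3 ->
  r1 < 0 -> 0 < r3 ->
  gcdz (gcdz r1 r2) r3 = 1 ->
  is_splitting (vec3 None v2 None) c3 ->
  is_splitting (vec2 None None) c2 ->
  ((forall m : int, grading_support (vec3 r1 r2 r3) c3 m) <->
   ((forall m : int, grading_support (vec2 r1 r3) c2 m) \/
    (~ grading_support (vec2 r1 r3) c2 r2 /\
     (forall m : int, grading_support (vec2 r1 r3) c2 m <-> (gcdz r1 r3 %| m)%Z) /\
     ge_ext v2 (gcdz r1 r3 - 1)))).
Proof.
move=> _ _ _ r1_lt0 r3_gt0 gcd1 split3 split2.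
have cop : coprimez (gcdz r1 r3) r2 by rewrite /coprimez gcdzAC gcd1.
have S2 m := support2_dvdz m r1_lt0 r3_gt0 split2.
rewrite (support3_full r1_lt0 r3_gt0 cop split3) {split3 split2}.
have dvd_r2 := @coprimez_dvdz_eq1 (gcdz r1 r3) r2 (le0z_nat _) cop.
split=> [v_ge | [full | [_ [_ v_ge]]] //].
  have [d1 | d_neq1] := eqVneq (gcdz r1 r3) 1; [left | right].
    by move=> m; apply/S2; rewrite d1 dvd1z.
  by split; first by rewrite S2 dvd_r2 (negbTE d_neq1).
by have /S2 := full r2; rewrite dvd_r2 => /eqP ->; case: v2.
Qed.
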